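(* Fix $j\ge1$. For every $k\in\mathbb{N}$ with $k+1\ge j$, $$A(k)\le\log(p_{k+1})\exp\!\left(c_1-\frac1{p_j}+\frac{5}{\log(p_{k+1})}\right).$$
   Context: $p_1=2<p_2=3<\cdots$ is the increasing enumeration of the primes. For fixed $j$ and $k\ge j-1$, $A(k)=\prod_{1\le\ell\le k+1,\ \ell\ne j}\frac{p_\ell+1}{p_\ell}$. The constant $c_1\approx0.261497$ is the Meissel–Mertens constant, i.e. $c_1=\lim_{x\to\infty}\big(\sum_{p\le x}1/p-\log\log x\big)$. *)

From mathcomp Require Import ssreflect ssrfun ssrbool eqtype ssrnat prime.
From Stdlib Require Import Reals.
From Coquelicot Require Import Coquelicot.

Set Implicit Arguments.
Local Open Scope nat_scope.

Lemma next_prime_ex (m : nat) : exists p, ((m < p)%N && prime p).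
Proof. case: (prime_above m) => p H1 H2; exists p; by rewrite H1 H2. Qed.

Definition next_prime (m : nat) : nat := ex_minn (next_prime_ex m).

Fixpoint pr (n : nat) : nat :=
  match n with
  | 0 => 2
  | n'.+1 => next_prime (pr n')
  end.

(* The paper's 1-indexed p_l = nth_prime l (p_1 = 2 < p_2 = 3 < ...). *)
Definition nth_prime (l : nat) : nat := pr l.-1.

Fixpoint prime_recip_sum (N : nat) : R :=
  match N with
  | 0 => 0%R
  | N'.+1 => (prime_recip_sum N' + (if prime N then / INR N else 0))%R
  end.

(* sum_{p <= x} 1/p for real x (x < 1 gives the empty sum) *)
Definition prime_recip_sum_R (x : R) : R :=
  prime_recip_sum (Z.to_nat (Int_part x)).

Fixpoint prod_upto (j n : nat) : R :=
  match n with
  | 0 => 1%R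
  | n'.+1 => (prod_upto j n' *
              (if n == j then 1 else (INR (nth_prime n) + 1) / INR (nth_prime n)))%R
  end.

Definition A (j k : nat) : R := prod_upto j k.+1.

(* The primorial of [2m+1] is at most the primorial
   of [m+1] times ['C(2m+1, m) <= 4^m], so [theta n <= n ln 4]; together with
   Legendre's formula for [ln n!] and Stirling-type bounds on [ln n!] this gives
   [ln n - 7/4 - ln 2 <= sum_{p<=n} ln p / p <= ln n + ln 4].  Abel summation
   then shows [sum_{p<=x} 1/p - ln ln x - 5/ln x <= sum_{p<=y} 1/p - ln ln y] for
   all [y > x >= 2], so the limit [c1] bounds the left-hand side.  Finally
   [(p+1)/p <= exp (1/p)], and omitting the factor at [p_j] removes [1/p_j]
   from the exponent. *)

From Stdlib Require Import Reals Lra.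
From Coquelicot Require Import Coquelicot.
From mathcomp Require Import ssreflect ssrfun ssrbool eqtype ssrnat seq div fintype.
From mathcomp Require Import prime bigop binomial.
From mathcomp Require Import zify.

Local Open Scope nat_scope.

Definition primorial (n : nat) : nat := \prod_(0 <= p < n.+1 | prime p) p.

Lemma primorial_gt0 n : 0 < primorial n.
Proof. by apply: prodn_cond_gt0 => p /prime_gt0. Qed.

Lemma prime_ndvd_fact p n : prime p -> n < p -> ~~ (p %| n`!).
Proof.
move=> p_pr; elim: n => [|n IHn] lt_np.
  by rewrite dvdn1; apply/eqP => p1; rewrite p1 in p_pr.
rewrite factS Euclid_dvdM // negb_or IHn 1?ltnW // andbT.
by apply/negP => /(dvdn_leq (ltn0Sn n)); rewrite leqNgt lt_np.
Qed.

Lemma prod_primes_dvdn (s : seq nat) N :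
  uniq s -> all prime s -> {in s, forall p, p %| N} -> \prod_(p <- s) p %| N.
Proof.
elim: s => [|p s IHs] /=; first by rewrite big_nil dvd1n.
case/andP=> p_s uniq_s /andP [p_pr pr_s] dvd_sN.
have cop_ps : coprime p (\prod_(q <- s) q).
  rewrite prime_coprime // Euclid_dvd_prod //; apply/negP.
  elim: s p_s pr_s {IHs uniq_s dvd_sN} => [|q s IHs]; rewrite ?big_nil // big_cons.
  rewrite inE negb_or => /andP [neq_pq p_s] /andP [q_pr pr_s] /orP [|]; last exact: IHs.
  by rewrite dvdn_prime2 // (negbTE neq_pq).
rewrite big_cons Gauss_dvd // dvd_sN ?mem_head //=.
by apply: IHs => // q q_s; apply: dvd_sN; rewrite inE q_s orbT.
Qed.

Lemma prod_primes_dvd_binomial m :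
  \prod_(m.+2 <= p < m.*2.+2 | prime p) p %| 'C(m.*2.+1, m).
Proof.
rewrite -big_filter; apply: prod_primes_dvdn.
- by rewrite filter_uniq ?iota_uniq.
- exact: filter_all.
move=> p; rewrite mem_filter mem_index_iota => /andP [p_pr /andP [lt_m1p le_p2m1]].
have cop_fact k : k < p -> coprime p k`! by move=> ?; rewrite prime_coprime ?prime_ndvd_fact.
rewrite -(Gauss_dvdl _ (cop_fact m (ltnW lt_m1p))) bin_ffact.
have lt_rest_p : m.*2.+1 - m < p by lia.
rewrite -(Gauss_dvdl _ (cop_fact _ lt_rest_p)) ffact_fact ?dvdn_fact ?prime_gt0 //; lia.
Qed.

Lemma binomial_mid_le m : 'C(m.*2.+1, m) <= 4 ^ m.
Proof.
have sym : 'C(m.*2.+1, m.+1) = 'C(m.*2.+1, m) by rewrite -bin_sub; [congr 'C(_, _) | ]; lia.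
have sum2 : \sum_(i < m.*2.+2) 'C(m.*2.+1, i) = 2 ^ m.*2.+1.
  by rewrite -[2]/(1 + 1) expnDn; apply: eq_bigr => i _; rewrite !exp1n !muln1.
have lt_m : m < m.*2.+2 by lia.
have lt_m1 : m.+1 < m.*2.+2 by lia.
rewrite (bigD1 (Ordinal lt_m)) // (bigD1 (Ordinal lt_m1)) /= in sum2; last first.
  by apply/eqP => /(congr1 val) /=; lia.
have two_terms : 'C(m.*2.+1, m) + 'C(m.*2.+1, m) <= 2 ^ m.*2.+1.
  by rewrite -{2}sym -sum2 addnA leq_addr.
have pow2 : 2 ^ m.*2.+1 = 2 * 4 ^ m by rewrite expnS -mul2n expnM.
lia.
Qed.

Lemma primorial_le n : primorial n <= 4 ^ n.
Proof.
elim/ltn_ind: n => n IHn.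
case: (ltnP n 3) => [|n_ge3].
  by case: n {IHn} => [|[|[|]]] // _; rewrite /primorial unlock.
have [n_odd | n_even] := boolP (odd n).
  have [m def_n] : exists m, n = m.*2.+1.
    by exists n./2; rewrite -{1}(odd_double_half n) n_odd -addnn; lia.
  rewrite def_n /primorial (@big_cat_nat _ _ _ m.+2) //= -/(primorial m.+1); last lia.
  have -> : 4 ^ m.*2.+1 = 4 ^ m.+1 * 4 ^ m by rewrite -expnD; congr (_ ^ _); lia.
  apply: leq_mul; first by apply: IHn; lia.
  apply: leq_trans (binomial_mid_le m).
  by apply: dvdn_leq; [rewrite bin_gt0; lia | exact: prod_primes_dvd_binomial].
have [n' def_n] : exists n', n = n'.+1 by exists n.-1; lia.
have n_npr : ~~ prime n.
  apply/negP => /even_prime [n2|n_odd]; [lia | by rewrite n_odd in n_even].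
rewrite /primorial def_n big_mkcond big_nat_recr //= -big_mkcond -/(primorial n').
rewrite -def_n (negbTE n_npr) muln1.
by rewrite def_n expnS; apply: leq_trans (IHn n' _) (leq_pmull _ _); lia.
Qed.

Local Open Scope R_scope.

Lemma INR_addn (a b : nat) : INR (a + b) = INR a + INR b.
Proof. by rewrite -plusE plus_INR. Qed.

Lemma INR_muln (a b : nat) : INR (a * b) = INR a * INR b.
Proof. by rewrite -multE mult_INR. Qed.

Lemma INR_expn (a b : nat) : INR (a ^ b) = INR a ^ b.
Proof. by elim: b => [|b IHb]; rewrite ?expn0 // expnS INR_muln IHb. Qed.

Lemma leq_INR (a b : nat) : (a <= b)%N -> INR a <= INR b.
Proof. by move/leP; apply: le_INR. Qed.

Lemma ltn_INR (a b : nat) : (a < b)%N -> INR a < INR b.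
Proof. by move/ltP; apply: lt_INR. Qed.

Lemma prime_INR_ge2 p : prime p -> 2 <= INR p.
Proof. by move/prime_gt1/leq_INR. Qed.

Lemma ln_gt0 x : 1 < x -> 0 < ln x.
Proof. by move=> lt1x; rewrite -ln_1; apply: ln_increasing; lra. Qed.

Lemma ln_le_sub1 x : 0 < x -> ln x <= x - 1.
Proof. by move=> x_gt0; have := exp_ineq1_le (ln x); rewrite exp_ln //; lra. Qed.

Lemma ln_sub_le a b : 0 < a -> a <= b -> ln b - ln a <= (b - a) / a.
Proof.
move=> a_gt0 le_ab; have ba_gt0 : 0 < b / a by apply: Rdiv_lt_0_compat; lra.
rewrite -ln_div; try lra; apply: Rle_trans (ln_le_sub1 _ ba_gt0) _.
by apply: Req_le; field; lra.
Qed.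

Lemma ln_succ_sub_le x : 0 < x -> ln (x + 1) - ln x <= / x.
Proof.
move=> x_gt0; apply: Rle_trans (ln_sub_le _ _ x_gt0 _) _; first lra.
by apply: Req_le; field; lra.
Qed.

Lemma ln2_le : ln 2 <= 3 / 4.
Proof.
have e8 := exp_ineq1_le (1 / 8).
have expM x : exp (2 * x) = exp x * exp x by rewrite -exp_plus; congr exp; ring.
have e4 : 81 / 64 <= exp (1 / 4).
  by rewrite (_ : 1 / 4 = 2 * (1 / 8)); [rewrite expM; nra | field].
have e2 : 6561 / 4096 <= exp (1 / 2).
  by rewrite (_ : 1 / 2 = 2 * (1 / 4)); [rewrite expM; nra | field].
have e34 : 2 <= exp (3 / 4).
  by rewrite (_ : 3 / 4 = 1 / 2 + 1 / 4); [rewrite exp_plus; nra | field].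
by rewrite -(ln_exp (3 / 4)); apply: ln_le; lra.
Qed.

Lemma ln_prod_nat (F : nat -> nat) n : (forall i, (0 < F i)%N) ->
  ln (INR (\prod_(0 <= i < n.+1) F i)) = sum_f_R0 (fun i => ln (INR (F i))) n.
Proof.
move=> F_gt0; elim: n => [|n IHn]; first by rewrite big_nat1.
rewrite big_nat_recr //= INR_muln ln_mult ?IHn //; apply: (ltn_INR 0) => //.
exact: prodn_gt0.
Qed.

Definition prime_weight (f : R -> R) (p : nat) : R := if prime p then f (INR p) else 0.

Definition chebyshev_theta (n : nat) : R := sum_f_R0 (prime_weight ln) n.

Definition mertens_sum (n : nat) : R := sum_f_R0 (prime_weight (fun x => ln x / x)) n.

Lemma chebyshev_theta_le n : chebyshev_theta n <= INR n * ln 4.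
Proof.
have -> : chebyshev_theta n = ln (INR (primorial n)).
  rewrite /chebyshev_theta /primorial big_mkcond ln_prod_nat => [|i].
    by apply: PartSum.sum_eq => i _; rewrite /prime_weight; case: ifP; rewrite ?ln_1.
  by case: ifP => // /prime_gt0.
rewrite -ln_pow; last lra.
apply: ln_le; first exact: (ltn_INR 0 _ (primorial_gt0 n)).
by rewrite (_ : 4 = INR 4); [rewrite -INR_expn; apply: leq_INR; exact: primorial_le | simpl; lra].
Qed.

Lemma logn_fact_le p n : prime p -> (p.-1 * logn p n`! <= n)%N.
Proof.
move=> p_pr; rewrite logn_fact //.
suff bound K : (p.-1 * \sum_(1 <= k < K.+1) n %/ p ^ k + n %/ p ^ K <= n)%N.
  exact: leq_trans (leq_addr _ _) (bound n).
elim: K => [|K IHK]; first by rewrite big_geq // muln0 expn0 divn1.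
have step : (p * (n %/ p ^ K.+1) <= n %/ p ^ K)%N.
  by rewrite expnSr divnMA mulnC leq_divM.
rewrite big_nat_recr //= mulnDr -addnA -mulSnr prednK ?prime_gt0 //; lia.
Qed.

Lemma logn_fact_gt p n : prime p -> (n < p * (logn p n`!).+1)%N.
Proof.
move=> p_pr; have p_gt0 := prime_gt0 p_pr.
apply: leq_trans (ltn_ceil n p_gt0) _.
rewrite mulnC leq_pmul2l // ltnS logn_fact //; case: n => [|n]; first by rewrite div0n.
by rewrite big_ltn // expn1 leq_addr.
Qed.

Lemma logn_fact_eq0 p n : (n < p)%N -> logn p n`! = 0%N.
Proof.
move=> lt_np; rewrite lognE; case: (boolP (prime p)) => //= p_pr.
by rewrite (negbTE (prime_ndvd_fact _ _ p_pr lt_np)) andbF.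
Qed.

Lemma sum_f_R0_vanishing (f : nat -> R) n d :
  (forall i, (n < i)%N -> f i = 0) -> sum_f_R0 f (n + d) = sum_f_R0 f n.
Proof.
move=> f0; elim: d => [|d IHd]; first by rewrite addn0.
by rewrite addnS tech5 IHd f0 ?Rplus_0_r // ltnS leq_addr.
Qed.

Lemma ln_fact_sum n : ln (INR n`!) = sum_f_R0 (fun p => ln (INR (p ^ logn p n`!))) n.
Proof.
rewrite -{1}(partnT (fact_gt0 n)) /partn big_mkcond /= ln_prod_nat => [|[|i]]; last 2 first.
- by rewrite lognE.
- by rewrite expn_gt0.
rewrite -[X in sum_f_R0 _ X](subnKC (fact_geq n)) sum_f_R0_vanishing // => p lt_np.
by rewrite logn_fact_eq0 // expn0 ln_1.
Qed.

Lemma ln_fact_succ n : ln (INR n.+1`!) = ln (INR n.+1) + ln (INR n`!).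
Proof.
rewrite factS INR_muln ln_mult //; first exact: (ltn_INR 0).
exact: (ltn_INR 0 _ (fact_gt0 n)).
Qed.

Lemma ln_fact_le n : ln (INR n`!) <= INR n * ln (INR n).
Proof.
elim: n => [|n IHn]; first by rewrite /= ln_1; lra.
rewrite ln_fact_succ.
have mono : INR n * ln (INR n) <= INR n * ln (INR n.+1).
  case: n {IHn} => [|n]; first by rewrite /= !Rmult_0_l; lra.
  apply: Rmult_le_compat_l; first exact: pos_INR.
  by apply: ln_le; [exact: (ltn_INR 0) | exact: leq_INR].
have -> : INR n.+1 * ln (INR n.+1) = ln (INR n.+1) + INR n * ln (INR n.+1) by rewrite S_INR; ring.
lra.
Qed.

Lemma ln_fact_ge n : INR n * ln (INR n) - INR n <= ln (INR n`!).
Proof.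
elim: n => [|n IHn]; first by rewrite /= ln_1; lra.
rewrite ln_fact_succ.
case: n IHn => [|n] IHn; first by rewrite /= ln_1; lra.
have n_gt0 : 0 < INR n.+1 by apply: (ltn_INR 0).
have := ln_succ_sub_le _ n_gt0; rewrite -S_INR => ln_step.
have : INR n.+1 * (ln (INR n.+2) - ln (INR n.+1)) <= 1.
  by apply: Rle_trans (Rmult_le_compat_l _ _ _ (Rlt_le _ _ n_gt0) ln_step) _; rewrite Rinv_r; lra.
rewrite [INR n.+2]S_INR; nra.
Qed.

Definition tail_term (m : nat) : R :=
  if (1 < m)%N then ln (INR m) / (INR m * (INR m - 1)) else 0.

Lemma tail_term_ge0 m : 0 <= tail_term m.
Proof.
rewrite /tail_term; case: ifP => [lt1m|_]; last lra.
have := leq_INR _ _ lt1m; rewrite /= => m_ge2.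
apply: Rmult_le_pos; first by rewrite -ln_1; apply: ln_le; lra.
by apply: Rlt_le; apply: Rinv_0_lt_compat; nra.
Qed.

(* The correction [(ln n + 3/2) / n] makes the partial sums telescope:
   adding [tail_term n.+1] costs less than the decrease of the correction. *)
Lemma tail_sum_telescope n : (1 < n)%N ->
  sum_f_R0 tail_term n + (ln (INR n) + 3 / 2) / INR n <= ln 2 + 3 / 4.
Proof.
elim: n => [|n IHn] //; rewrite ltnS leq_eqVlt => /orP [/eqP <-|lt1n].
  by rewrite /= /tail_term /= (_ : 1 + 1 = 2); lra.
rewrite tech5 {2}/tail_term ltnS ltnW // S_INR.
have IH := IHn lt1n.
have x_ge2 : 2 <= INR n by have := leq_INR _ _ lt1n; rewrite /=; lra.
set x := INR n in IH x_ge2 *.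
have ln_step := ln_succ_sub_le x ltac:(lra).
suff : ln (x + 1) / ((x + 1) * (x + 1 - 1)) + (ln (x + 1) + 3 / 2) / (x + 1)
   <= (ln x + 3 / 2) / x by lra.
have -> : ln (x + 1) / ((x + 1) * (x + 1 - 1)) + (ln (x + 1) + 3 / 2) / (x + 1)
   = ((x + 1) * ln (x + 1) + 3 / 2 * x) / (x * (x + 1)) by field; lra.
have -> : (ln x + 3 / 2) / x = ((x + 1) * ln x + 3 / 2 * (x + 1)) / (x * (x + 1)) by field; lra.
apply: Rmult_le_compat_r; first by apply: Rlt_le; apply: Rinv_0_lt_compat; nra.
have : (x + 1) * (ln (x + 1) - ln x) <= (x + 1) * / x by apply: Rmult_le_compat_l; lra.
have : (x + 1) * / x <= 3 / 2.
  by apply: (Rmult_le_reg_r x); [lra | rewrite Rmult_assoc Rinv_l; lra].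
lra.
Qed.

Lemma tail_sum_le n : sum_f_R0 tail_term n <= ln 2 + 3 / 4.
Proof.
have ln2_gt0 : 0 < ln 2 by apply: ln_gt0; lra.
case: (ltnP 1 n) => [lt1n|]; last by case: n => [|[|]] //= _; rewrite /tail_term /=; lra.
have := tail_sum_telescope n lt1n.
have := leq_INR _ _ lt1n; rewrite /= => n_ge2.
have : 0 <= (ln (INR n) + 3 / 2) / INR n.
  apply: Rmult_le_pos; last by apply: Rlt_le; apply: Rinv_0_lt_compat; lra.
  have : 0 <= ln (INR n) by rewrite -ln_1; apply: ln_le; lra.
  lra.
lra.
Qed.

Lemma ln_pfactor p k : prime p -> ln (INR (p ^ k)) = INR k * ln (INR p).
Proof.
by move=> p_pr; rewrite INR_expn ln_pow //; apply: (ltn_INR 0); exact: prime_gt0.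
Qed.

Lemma ln_pfactor_fact_le p n :
  ln (INR (p ^ logn p n`!)) <=
  INR n * prime_weight (fun x => ln x / x) p + INR n * tail_term p.
Proof.
rewrite /prime_weight; case: (boolP (prime p)) => p_pr; last first.
  rewrite lognE (negbTE p_pr) /= ln_1 Rmult_0_r Rplus_0_l.
  by apply: Rmult_le_pos; [exact: pos_INR | exact: tail_term_ge0].
rewrite /tail_term prime_gt1 // ln_pfactor //.
have P_ge2 := prime_INR_ge2 _ p_pr; have lnP_gt0 : 0 < ln (INR p) by apply: ln_gt0; lra.
have -> : INR n * (ln (INR p) / INR p) + INR n * (ln (INR p) / (INR p * (INR p - 1)))
  = INR n / (INR p - 1) * ln (INR p) by field; lra.
apply: Rmult_le_compat_r; first lra.
have := leq_INR _ _ (logn_fact_le p n p_pr); rewrite INR_muln.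
rewrite (_ : INR p.-1 = INR p - 1); last by rewrite -(prednK (prime_gt0 p_pr)) S_INR /=; lra.
move=> H; apply: (Rmult_le_reg_l (INR p - 1)); first lra.
by rewrite /Rdiv -Rmult_assoc (Rmult_comm _ (INR n)) Rmult_assoc Rinv_r; lra.
Qed.

Lemma ln_pfactor_fact_ge p n :
  INR n * prime_weight (fun x => ln x / x) p - prime_weight ln p <= ln (INR (p ^ logn p n`!)).
Proof.
rewrite /prime_weight; case: (boolP (prime p)) => p_pr; last first.
  by rewrite lognE (negbTE p_pr) /= ln_1; lra.
rewrite ln_pfactor //.
have P_ge2 := prime_INR_ge2 _ p_pr; have lnP_gt0 : 0 < ln (INR p) by apply: ln_gt0; lra.
have -> : INR n * (ln (INR p) / INR p) - ln (INR p) = (INR n / INR p - 1) * ln (INR p).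
  by field; lra.
apply: Rmult_le_compat_r; first lra.
have := ltn_INR _ _ (logn_fact_gt p n p_pr); rewrite INR_muln S_INR => H.
apply: (Rmult_le_reg_l (INR p)); first lra.
by rewrite Rmult_minus_distr_l /Rdiv -Rmult_assoc (Rmult_comm _ (INR n)) Rmult_assoc Rinv_r; lra.
Qed.

Lemma mertens_sum_ge n : (0 < n)%N -> ln (INR n) <= mertens_sum n + (7 / 4 + ln 2).
Proof.
move=> n_gt0; have n_pos : 0 < INR n by apply: (ltn_INR 0).
have fact_le : ln (INR n`!) <= INR n * mertens_sum n + INR n * sum_f_R0 tail_term n.
  rewrite ln_fact_sum /mertens_sum !scal_sum -plus_sum; apply: sum_Rle => p _.
  by rewrite (Rmult_comm _ (INR n)) (Rmult_comm (tail_term p)); exact: ln_pfactor_fact_le.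
have := ln_fact_ge n.
have := Rmult_le_compat_l _ _ _ (Rlt_le _ _ n_pos) (tail_sum_le n).
move=> *; apply: (Rmult_le_reg_l (INR n)) => //; lra.
Qed.

Lemma mertens_sum_le n : (0 < n)%N -> mertens_sum n <= ln (INR n) + ln 4.
Proof.
move=> n_gt0; have n_pos : 0 < INR n by apply: (ltn_INR 0).
have fact_ge : INR n * mertens_sum n - chebyshev_theta n <= ln (INR n`!).
  rewrite ln_fact_sum /mertens_sum /chebyshev_theta scal_sum -minus_sum; apply: sum_Rle => p _.
  by rewrite Rmult_comm; exact: ln_pfactor_fact_ge.
have := ln_fact_le n; have := chebyshev_theta_le n.
move=> *; apply: (Rmult_le_reg_l (INR n)) => //; lra.
Qed.

Lemma prime_recip_sum_abel_step y : 0 < ln (INR y.+1) ->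
  prime_recip_sum y.+1 - mertens_sum y.+1 / ln (INR y.+1) =
  prime_recip_sum y - mertens_sum y / ln (INR y.+1).
Proof.
move=> ln_pos; have y_pos : 0 < INR y.+1 by apply: (ltn_INR 0).
change (prime_recip_sum y.+1) with (prime_recip_sum y + (if prime y.+1 then / INR y.+1 else 0)).
by rewrite /mertens_sum tech5 /prime_weight; case: ifP => _; field; lra.
Qed.

Lemma ln_sub_le_weighted a b s : 0 < a -> a <= b -> a <= s ->
  ln b - ln a <= s * (/ a - / b) + (b - a) ^ 2 / (a * b).
Proof.
move=> a_gt0 le_ab le_as; apply: Rle_trans (ln_sub_le _ _ a_gt0 le_ab) _.
have -> : (b - a) / a = a * (/ a - / b) + (b - a) ^ 2 / (a * b) by field; lra.
apply: Rplus_le_compat_r; apply: Rmult_le_compat_r => //.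
have : / b <= / a by apply: Rinv_le_contravar.
lra.
Qed.

Section MertensSecond.
Variable x : nat.
Hypothesis x_ge2 : (2 <= x)%N.

Let l := ln (INR x + 1).
Let c := / (l * l).

(* Discrete Abel summation: [Phi] is nondecreasing beyond [x] (this needs only
   the lower bound [mertens_sum_ge]) and stays within [O(1/ln y)] of
   [prime_recip_sum y - ln (ln (INR y))]. *)
Let Phi (y : nat) := prime_recip_sum y - mertens_sum y / ln (INR y) - ln (ln (INR y))
   - (7 / 4 + ln 2) / ln (INR y) - c / (INR y - 1).

Lemma INR_x_ge2 : 2 <= INR x.
Proof. by have := leq_INR _ _ x_ge2; rewrite /=; lra. Qed.

Lemma l_ge1 : 1 <= l.
Proof.
rewrite -(ln_exp 1); apply: ln_le; first exact: exp_pos.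
have := exp_le_3; have := INR_x_ge2; lra.
Qed.

Lemma ln_ln_gap_le y : (x < y)%N ->
  (ln (INR y.+1) - ln (INR y)) ^ 2 / (ln (INR y) * ln (INR y.+1)) <=
  c / (INR y - 1) - c / INR y.
Proof.
move=> lt_xy; have x2 := INR_x_ge2; have l1 := l_ge1.
have y_ge : INR x + 1 <= INR y by rewrite -S_INR; apply: leq_INR.
have la : l <= ln (INR y) by apply: ln_le; lra.
have ab : ln (INR y) <= ln (INR y.+1) by apply: ln_le; [lra | rewrite S_INR; lra].
have gap : ln (INR y.+1) - ln (INR y) <= / INR y by rewrite S_INR; apply: ln_succ_sub_le; lra.
set a := ln (INR y) in la ab gap *; set b := ln (INR y.+1) in ab gap *.
set Y := INR y in y_ge gap *.
have -> : c / (Y - 1) - c / Y = c * / (Y * (Y - 1)) by field; lra.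
apply: Rle_trans (_ : / Y ^ 2 * c <= _); last first.
  rewrite Rmult_comm; apply: Rmult_le_compat_l.
    by apply: Rlt_le; apply: Rinv_0_lt_compat; nra.
  by apply: Rinv_le_contravar; nra.
rewrite /Rdiv; apply: Rmult_le_compat.
- nra.
- by apply: Rlt_le; apply: Rinv_0_lt_compat; nra.
- by rewrite -pow_inv; apply: pow_incr; lra.
- by rewrite /c; apply: Rinv_le_contravar; [nra | apply: Rmult_le_compat; lra].
Qed.

Lemma Phi_succ_ge y : (x < y)%N -> Phi y <= Phi y.+1.
Proof.
move=> lt_xy; have x2 := INR_x_ge2; have l1 := l_ge1.
have y_ge : INR x + 1 <= INR y by rewrite -S_INR; apply: leq_INR.
have la : l <= ln (INR y) by apply: ln_le; lra.
have ab : ln (INR y) <= ln (INR y.+1) by apply: ln_le; [lra | rewrite S_INR; lra].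
have a_gt0 : 0 < ln (INR y) by lra.
have M_ge := mertens_sum_ge y (leq_ltn_trans (leq0n x) lt_xy).
have lnln := ln_sub_le_weighted _ _ _ a_gt0 ab M_ge.
have gap := ln_ln_gap_le y lt_xy.
rewrite /Phi prime_recip_sum_abel_step; last lra.
have -> : INR y.+1 - 1 = INR y by rewrite S_INR; ring.
set a := ln (INR y) in a_gt0 ab lnln gap *; set b := ln (INR y.+1) in ab lnln gap *.
lra.
Qed.

Lemma Phi_nondecreasing y : (x < y)%N -> Phi x.+1 <= Phi y.
Proof.
elim: y => [|y IHy] //; rewrite ltnS leq_eqVlt => /orP [/eqP <-|lt_xy]; first lra.
exact: Rle_trans (IHy lt_xy) (Phi_succ_ge y lt_xy).
Qed.

Lemma Phi_le y : (x < y)%N -> Phi y <= prime_recip_sum y - ln (ln (INR y)) - 1.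
Proof.
move=> lt_xy; have x2 := INR_x_ge2.
have y_ge : INR x + 1 <= INR y by rewrite -S_INR; apply: leq_INR.
have a_gt0 : 0 < ln (INR y) by apply: ln_gt0; lra.
have M_ge := mertens_sum_ge y (leq_ltn_trans (leq0n x) lt_xy).
have c_ge0 : 0 <= c / (INR y - 1).
  apply: Rmult_le_pos; last by apply: Rlt_le; apply: Rinv_0_lt_compat; lra.
  by apply: Rlt_le; apply: Rinv_0_lt_compat; have := l_ge1; nra.
have : 1 <= (mertens_sum y + (7 / 4 + ln 2)) / ln (INR y).
  by apply: (Rmult_le_reg_r (ln (INR y))) => //; rewrite /Rdiv Rmult_assoc Rinv_l; lra.
rewrite /Phi /Rdiv Rmult_plus_distr_r; lra.
Qed.

Lemma ln_x_gt0 : 0 < ln (INR x).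
Proof. by apply: ln_gt0; have := INR_x_ge2; lra. Qed.

Lemma ln_x_le_l : ln (INR x) <= l.
Proof. by apply: ln_le; have := INR_x_ge2; lra. Qed.

Lemma mertens_quotient_le :
  (mertens_sum x + (7 / 4 + ln 2)) / l <= 1 + (ln 4 + (7 / 4 + ln 2)) / ln (INR x).
Proof.
have l1 := l_ge1; have lx := ln_x_gt0; have lxl := ln_x_le_l.
have M_le := mertens_sum_le x (leq_trans (isT : (0 < 2)%N) x_ge2).
have ln2_gt0 : 0 < ln 2 by apply: ln_gt0; lra.
have ln4_gt0 : 0 < ln 4 by apply: ln_gt0; lra.
apply: Rle_trans (_ : (l + (ln 4 + (7 / 4 + ln 2))) / l <= _).
  by apply: Rmult_le_compat_r; [apply: Rlt_le; apply: Rinv_0_lt_compat | ]; lra.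
rewrite /Rdiv Rmult_plus_distr_r Rinv_r; last lra.
apply: Rplus_le_compat_l; apply: Rmult_le_compat_l; first lra.
exact: Rinv_le_contravar.
Qed.

Lemma ln_l_sub_le : ln l - ln (ln (INR x)) <= / 2 / ln (INR x).
Proof.
have lx := ln_x_gt0; have x2 := INR_x_ge2.
apply: Rle_trans (ln_sub_le _ _ lx ln_x_le_l) _.
apply: Rmult_le_compat_r; first by apply: Rlt_le; apply: Rinv_0_lt_compat.
apply: Rle_trans (ln_succ_sub_le _ _) _; first lra.
by apply: Rinv_le_contravar; lra.
Qed.

Lemma c_div_x_le : c / INR x <= / 2 / ln (INR x).
Proof.
have l1 := l_ge1; have lx := ln_x_gt0; have lxl := ln_x_le_l; have x2 := INR_x_ge2.
have -> : c / INR x = / (INR x * l * l) by rewrite /c; field; split; lra.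
have -> : / 2 / ln (INR x) = / (2 * ln (INR x)) by field; lra.
by apply: Rinv_le_contravar; nra.
Qed.

Lemma Phi_x_succ_ge : prime_recip_sum x - ln (ln (INR x)) - 5 / ln (INR x) <= Phi x.+1 + 1.
Proof.
have l1 := l_ge1; have lx := ln_x_gt0; have x2 := INR_x_ge2.
have Phi_x1 : Phi x.+1 =
    prime_recip_sum x - mertens_sum x / l - ln l - (7 / 4 + ln 2) / l - c / INR x.
  have abel := prime_recip_sum_abel_step x; rewrite S_INR -/l in abel.
  rewrite /Phi S_INR -/l abel; last lra.
  by rewrite (_ : INR x + 1 - 1 = INR x); last ring.
have := mertens_quotient_le; have := ln_l_sub_le; have := c_div_x_le.
have ln4 : ln 4 <= 3 / 2.
  by rewrite (_ : 4 = 2 * 2); [rewrite ln_mult; have := ln2_le; lra | ring].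
have : (ln 4 + (7 / 4 + ln 2) + / 2 + / 2) / ln (INR x) <= 5 / ln (INR x).
  by apply: Rmult_le_compat_r; [apply: Rlt_le; apply: Rinv_0_lt_compat | have := ln2_le; lra].
rewrite Phi_x1 /Rdiv !Rmult_plus_distr_r; lra.
Qed.

Lemma prime_recip_sum_sub_lnln_ge y : (x < y)%N ->
  prime_recip_sum x - ln (ln (INR x)) - 5 / ln (INR x) <=
  prime_recip_sum y - ln (ln (INR y)).
Proof.
move=> lt_xy; have := Phi_nondecreasing y lt_xy; have := Phi_x_succ_ge.
have := Phi_le y lt_xy; lra.
Qed.

End MertensSecond.

Lemma prime_recip_sum_sub_lnln_le_limit (c1 : R) (x : nat) :
  is_lim (fun x => prime_recip_sum_R x - ln (ln x)) p_infty c1 -> (2 <= x)%N ->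
  prime_recip_sum x - ln (ln (INR x)) - 5 / ln (INR x) <= c1.
Proof.
move=> lim_c1 x_ge2; apply: Rnot_lt_le => lt_c1.
set v := prime_recip_sum x - ln (ln (INR x)) - 5 / ln (INR x) in lt_c1.
have eps_gt0 : 0 < v - c1 by lra.
move/is_lim_spec: lim_c1 => /(_ (mkposreal _ eps_gt0)) [M near_c1].
have [n M_lt_n] := INR_unbounded M.
set y := (x.+1 + n)%N.
have M_lt_y : M < INR y by rewrite /y INR_addn; have := pos_INR x.+1; lra.
have := near_c1 _ M_lt_y.
rewrite /prime_recip_sum_R Int_part_INR Znat.Nat2Z.id => /Rabs_def2 [close _].
have := prime_recip_sum_sub_lnln_ge x x_ge2 y (leq_addr _ _).
rewrite -/v; cbn [pos] in close; lra.
Qed.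

Lemma next_prime_spec m :
  [/\ (m < next_prime m)%N, prime (next_prime m) &
      forall q, (m < q)%N -> prime q -> (next_prime m <= q)%N].
Proof.
rewrite /next_prime; case: ex_minnP => p /andP [lt_mp p_pr] p_min; split => // q lt_mq q_pr.
by apply: p_min; rewrite lt_mq q_pr.
Qed.

Lemma pr_prime n : prime (pr n).
Proof. by case: n => [|n] //=; case: (next_prime_spec (pr n)). Qed.

Lemma pr_ge2 n : (2 <= pr n)%N.
Proof. exact: prime_gt1 (pr_prime n). Qed.

Lemma prime_recip_sum_gap a d : (forall q, (a < q <= a + d)%N -> ~~ prime q) ->
  prime_recip_sum (a + d) = prime_recip_sum a.
Proof.
elim: d => [|d IHd] gap; first by rewrite addn0.
rewrite addnS /= (negbTE (gap _ _)); last by rewrite addnS ltnS leq_addr leqnn.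
by rewrite Rplus_0_r IHd // => q /andP [lt_aq le_q]; apply: gap; rewrite lt_aq addnS ltnW.
Qed.

Lemma prime_recip_sum_pr_succ n :
  prime_recip_sum (pr n.+1) = prime_recip_sum (pr n) + / INR (pr n.+1).
Proof.
have [lt_next _ next_min] := next_prime_spec (pr n).
rewrite -[next_prime (pr n)]/(pr n.+1) in lt_next next_min.
set m := (pr n.+1 - pr n).-1.
have def_next : pr n.+1 = (pr n + m).+1 by rewrite /m; lia.
rewrite [in LHS]def_next.
change (prime_recip_sum (pr n + m).+1) with
  (prime_recip_sum (pr n + m) + (if prime (pr n + m).+1 then / INR (pr n + m).+1 else 0)).
rewrite -def_next pr_prime prime_recip_sum_gap // => q /andP [lt_q le_q].
by apply/negP => q_pr; have := next_min q lt_q q_pr; lia.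
Qed.

Lemma exp_le_compat x y : x <= y -> exp x <= exp y.
Proof. by case=> [lt_xy | ->]; [apply: Rlt_le; apply: exp_increasing | apply: Rle_refl]. Qed.

Lemma factor_le_exp p : 0 < p -> (p + 1) / p <= exp (/ p).
Proof.
move=> p_gt0; apply: Rle_trans (exp_ineq1_le (/ p)).
by apply: Req_le; field; lra.
Qed.

Lemma prod_upto_gt0 j n : 0 < prod_upto j n.
Proof.
elim: n => [|n IHn] /=; first lra.
apply: Rmult_lt_0_compat => //; case: eqP => _; first lra.
have : 0 < INR (nth_prime n.+1) by apply: (ltn_INR 0); exact: prime_gt0 (pr_prime _).
by move=> ?; apply: Rdiv_lt_0_compat; lra.
Qed.

Lemma prod_upto_le_exp j n : (1 <= j)%N ->
  prod_upto j n.+1 <=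
  exp (prime_recip_sum (pr n) - (if (j <= n.+1)%N then / INR (nth_prime j) else 0)).
Proof.
move=> j_ge1; elim: n => [|n IHn].
  have sum_pr0 : prime_recip_sum (pr 0) = / INR (pr 0) by rewrite /=; lra.
  have p0_gt0 : 0 < INR (pr 0) by apply: (ltn_INR 0); exact: prime_gt0 (pr_prime 0).
  change (prod_upto j 1) with
    (1 * (if 1%N == j then 1 else (INR (pr 0) + 1) / INR (pr 0))).
  rewrite sum_pr0 Rmult_1_l; case: (eqVneq 1%N j) => [<- | ne_1j].
    by rewrite leqnn Rminus_diag exp_0; lra.
  have -> : (j <= 1)%N = false by lia.
  by rewrite Rminus_0_r; apply: factor_le_exp.
have p_gt0 : 0 < INR (pr n.+1) by apply: (ltn_INR 0); exact: prime_gt0 (pr_prime _).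
change (prod_upto j n.+2) with (prod_upto j n.+1 *
  (if n.+2 == j then 1 else (INR (pr n.+1) + 1) / INR (pr n.+1))).
rewrite prime_recip_sum_pr_succ; case: eqP => [def_j | /eqP ne_j].
  rewrite -def_j ltnn Rminus_0_r in IHn; rewrite -def_j leqnn Rmult_1_r.
  by rewrite [nth_prime _]/= Rplus_minus_r.
rewrite (leq_eqVlt j) eq_sym (negbTE ne_j) orFb ltnS.
have -> : prime_recip_sum (pr n) + / INR (pr n.+1) -
    (if (j <= n.+1)%N then / INR (nth_prime j) else 0) =
  prime_recip_sum (pr n) - (if (j <= n.+1)%N then / INR (nth_prime j) else 0) + / INR (pr n.+1)
  by ring.
rewrite exp_plus; apply: Rmult_le_compat => //; last exact: factor_le_exp.
- exact: Rlt_le (prod_upto_gt0 j n.+1).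
- by apply: Rlt_le; apply: Rdiv_lt_0_compat; lra.
Qed.

Theorem mainTheorem8 (c1 : R) (j k : nat)
  (Hc1 : is_lim (fun x => (prime_recip_sum_R x - ln (ln x))%R) p_infty c1)
  (Hj : (1 <= j)%nat) (Hjk : (j <= k.+1)%nat) :
  (A j k <= ln (INR (nth_prime k.+1)) *
     exp (c1 - / INR (nth_prime j) + 5 / ln (INR (nth_prime k.+1))))%R.
Proof.
have A_le := prod_upto_le_exp j k Hj; rewrite Hjk in A_le.
have sum_le := prime_recip_sum_sub_lnln_le_limit c1 (pr k) Hc1 (pr_ge2 k).
have ln_gt0' : 0 < ln (INR (pr k)) by apply: ln_gt0; have := leq_INR _ _ (pr_ge2 k); simpl; lra.
change (nth_prime k.+1) with (pr k); rewrite -[ln (INR (pr k)) in X in X * _]exp_ln // -exp_plus.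
by apply: Rle_trans A_le (exp_le_compat _ _ _); lra.
Qed.
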